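(* Let $\mathfrak{n}$ be the real $7$-dimensional Lie algebra with basis $e_1,\dots,e_7$ whose nonzero brackets (up to antisymmetry) are $[e_1,e_2]=e_4$, $[e_1,e_4]=e_6$, $[e_1,e_5]=-e_7$, $[e_1,e_6]=e_7$, $[e_2,e_3]=e_5$, $[e_2,e_5]=e_7$, $[e_3,e_4]=e_7$. Then $\mathfrak{n}$ is not an Einstein nilradical.
   Context: A real nilpotent Lie algebra $\mathfrak{n}$ is called an Einstein nilradical if it admits an inner product such that the left-invariant Riemannian metric it defines on the simply connected nilpotent Lie group with Lie algebra $\mathfrak{n}$ is a nilsoliton, i.e. its Ricci operator satisfies $\mathrm{Ric}=c\,\mathrm{Id}+D$ for some $c\in\mathbb{R}$ and some derivation $D$ of $\mathfrak{n}$. Brackets of basis elements not listed are zero. *)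

From HB Require Import structures.
From mathcomp Require Import all_boot all_order all_algebra.
From mathcomp Require Import reals.
Set Implicit Arguments. Unset Strict Implicit. Unset Printing Implicit Defensive.
Import Order.TTheory GRing.Theory Num.Theory.
Local Open Scope ring_scope.

(* An inner product on R^n is encoded by a basis F (rows of an invertible
   matrix), namely the unique inner product for which the rows of F are
   orthonormal; every inner product arises this way. *)

Section MetricLie.
Variables (R : realType) (n : nat).
Implicit Types (br : 'rV[R]_n -> 'rV[R]_n -> 'rV[R]_n) (F : 'M[R]_n).

Definition ip F (x y : 'rV[R]_n) : R :=
  ((x *m invmx F) *m (y *m invmx F)^T) 0 0.

(* matrix of ad x (row-vector convention: y *m admx x = [x, y]) *)
Definition admx br (x : 'rV[R]_n) : 'M[R]_n :=
  \matrix_(i < n) br x (delta_mx 0 i).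

Definition killing br (x y : 'rV[R]_n) : R := \tr (admx br x *m admx br y).

(* mean curvature vector H : <H, x> = tr (ad x) *)
Definition meancurv br F : 'rV[R]_n :=
  \sum_(i < n) (\tr (admx br (row i F))) *: row i F.

(* Ricci tensor of the left-invariant metric (Besse, Einstein Manifolds 7.38),
   computed with the orthonormal basis (row i F)_i:
   ric(X,Y) = -1/2 sum_i <[X,f_i],[Y,f_i]> - 1/2 B(X,Y)
              + 1/4 sum_{i,j} <[f_i,f_j],X><[f_i,f_j],Y>
              - 1/2 (<[H,X],Y> + <[H,Y],X>) *)
Definition ric br F (x y : 'rV[R]_n) : R :=
  - (1/2) * (\sum_(i < n) ip F (br x (row i F)) (br y (row i F)))
  - (1/2) * killing br x y
  + (1/4) * (\sum_(i < n) \sum_(j < n)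
               ip F (br (row i F) (row j F)) x * ip F (br (row i F) (row j F)) y)
  - (1/2) * (ip F (br (meancurv br F) x) y + ip F (br (meancurv br F) y) x).

(* Ricci operator: <Ric x, y> = ric(x, y) *)
Definition RicOp br F (x : 'rV[R]_n) : 'rV[R]_n :=
  \sum_(i < n) ric br F x (row i F) *: row i F.

Definition is_derivation br (D : 'M[R]_n) : Prop :=
  forall x y : 'rV[R]_n, br x y *m D = br (x *m D) y + br x (y *m D).

Definition nilsoliton br F : Prop :=
  exists (c : R) (D : 'M[R]_n), is_derivation br D /\
    forall x : 'rV[R]_n, RicOp br F x = c *: x + x *m D.

Definition einstein_nilradical br : Prop :=
  exists F : 'M[R]_n, F \in unitmx /\ nilsoliton br F.

End MetricLie.

(* The specific 7-dimensional Lie algebra; e_k (k = 1..7) is basis vector index k-1. *)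
Section N7.
Variable R : realType.

Definition ee (k : nat) : 'rV[R]_7 := delta_mx 0 (inord k.-1).

Definition n7b (i j : 'I_7) : 'rV[R]_7 :=
  match (nat_of_ord i).+1, (nat_of_ord j).+1 with
  | 1, 2 => ee 4 | 2, 1 => - ee 4
  | 1, 4 => ee 6 | 4, 1 => - ee 6
  | 1, 5 => - ee 7 | 5, 1 => ee 7
  | 1, 6 => ee 7 | 6, 1 => - ee 7
  | 2, 3 => ee 5 | 3, 2 => - ee 5
  | 2, 5 => ee 7 | 5, 2 => - ee 7
  | 3, 4 => ee 7 | 4, 3 => - ee 7
  | _, _ => 0
  end.

Definition n7br (x y : 'rV[R]_7) : 'rV[R]_7 :=
  \sum_(i < 7) \sum_(j < 7) (x 0 i * y 0 j) *: n7b i j.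

End N7.

(* Suppose an inner product makes n a nilsoliton, Ric = c Id + D.  Every
   derivation of n is upper triangular in the basis e_1, ..., e_7, with diagonal
   t (1, 1, 2, 2, 3, 3, 4).  Gram-Schmidt applied to e_1, ..., e_7 gives an
   orthonormal basis q_i with q_i in span (e_i, ..., e_7) (a Cholesky
   factorisation of the Gram matrix); since D is self-adjoint (Ric is
   symmetric) and upper triangular, it is diagonal in this basis, so the
   structure constants s_ij^k of the q_i are graded by the weights.
   Comparing diagonal entries of the Ricci operator yields, for every E,
     sum_k E_k (c + D_kk) = 1/4 sum_ijk (E_k - E_i - E_j) (s_ij^k)^2.
   Taking E = 1 and E = indicator of e_7 shows t > 0.  Then
   E = (-3, 10, -18, 8, -7, 6, 4), orthogonal to (1, ..., 1) and to the weights,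
   makes the left side vanish, while every term on the right is nonnegative and
   the one for s_12^4 <> 0 is positive. *)

From mathcomp Require Import all_boot all_order all_algebra reals.
From mathcomp Require Import ring lra.
Set Implicit Arguments. Unset Strict Implicit. Unset Printing Implicit Defensive.
Import Order.TTheory GRing.Theory Num.Theory.
Local Open Scope ring_scope.

Section TriangularMatrices.
Variable R : comPzRingType.

Lemma is_trig_mxM n (A B : 'M[R]_n) :
  is_trig_mx A -> is_trig_mx B -> is_trig_mx (A *m B).
Proof.
move=> /is_trig_mxP tA /is_trig_mxP tB; apply/is_trig_mxP => i j lij.
rewrite mxE big1 // => k _.
case: (ltnP i k) => [ik|ki]; first by rewrite tA // mul0r.
by rewrite tB ?mulr0 // (leq_ltn_trans ki lij).
Qed.

Lemma utrig_mulmx_diag n (A B : 'M[R]_n) k :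
  is_trig_mx A^T -> is_trig_mx B^T -> (A *m B) k k = A k k * B k k.
Proof.
move=> /is_trig_mxP tA /is_trig_mxP tB.
rewrite mxE (bigD1 k) //= big1 ?addr0 // => m /negbTE mk.
case: (ltngtP m k) => [mlk|klm|/val_inj emk]; last by rewrite emk eqxx in mk.
  by have := tA m k mlk; rewrite mxE => ->; rewrite mul0r.
by have := tB k m klm; rewrite mxE => ->; rewrite mulr0.
Qed.

Lemma utrig_mx_ifE n (A : 'M[R]_n) : is_trig_mx A^T ->
  A = \matrix_(i, j) (if (j < i)%N then 0 else A i j).
Proof.
move=> /is_trig_mxP tA; apply/matrixP => i j; rewrite mxE.
by case: ifP => // ji; have := tA j i ji; rewrite mxE.
Qed.

End TriangularMatrices.

Section OrthogonalChange.
Variables (R : comPzRingType) (n : nat).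

Lemma sum_delta (l : 'I_n) (b : 'I_n -> R) : \sum_(m < n) (l == m)%:R * b m = b l.
Proof.
rewrite (bigD1 l) //= eqxx mul1r big1 ?addr0 // => m /negbTE.
by rewrite eq_sym => ->; rewrite mul0r.
Qed.

Lemma bilinear_rows_trace_orthogonal (beta : 'rV[R]_n -> 'rV[R]_n -> R) (O F : 'M[R]_n) :
  (forall u v w, beta (u + v) w = beta u w + beta v w) ->
  (forall a u w, beta (a *: u) w = a * beta u w) ->
  (forall u v w, beta w (u + v) = beta w u + beta w v) ->
  (forall a u w, beta w (a *: u) = a * beta w u) ->
  O^T *m O = 1%:M ->
  \sum_(i < n) beta (row i (O *m F)) (row i (O *m F)) =
  \sum_(i < n) beta (row i F) (row i F).
Proof.
move=> Dl Zl Dr Zr OO.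
have suml (f : 'I_n -> 'rV[R]_n) w : beta (\sum_l f l) w = \sum_l beta (f l) w.
  by apply: (big_morph _ (fun u v => Dl u v w)); rewrite -(scale0r 0) Zl mul0r.
have sumr (f : 'I_n -> 'rV[R]_n) w : beta w (\sum_l f l) = \sum_l beta w (f l).
  by apply: (big_morph _ (fun u v => Dr u v w)); rewrite -(scale0r 0) Zr mul0r.
have rowOF i : row i (O *m F) = \sum_l O i l *: row l F.
  by rewrite row_mul mulmx_sum_row; apply: eq_bigr => l _; rewrite mxE.
transitivity (\sum_i \sum_l \sum_m O i l * O i m * beta (row l F) (row m F)).
  apply: eq_bigr => i _; rewrite !rowOF suml; apply: eq_bigr => l _.
  rewrite Zl sumr mulr_sumr; apply: eq_bigr => m _.
  by rewrite Zr !mulrA.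
rewrite exchange_big; apply: eq_bigr => l _; rewrite exchange_big /=.
rewrite -(sum_delta l (fun m => beta (row l F) (row m F))).
apply: eq_bigr => m _; rewrite -mulr_suml; congr (_ * _).
have := congr1 (fun A : 'M_n => A l m) OO.
by rewrite !mxE => <-; apply: eq_bigr => i _; rewrite !mxE.
Qed.

End OrthogonalChange.

Section Cholesky.
Variable R : rcfType.

Definition posdef n (M : 'M[R]_n) :=
  forall v : 'rV[R]_n, v != 0 -> 0 < (v *m M *m v^T) 0 0.

Lemma mulmx_tr_gt0 n (u : 'rV[R]_n) : u != 0 -> 0 < (u *m u^T) 0 0.
Proof.
move=> nz; have [i ui] : exists i, u 0 i != 0.
  apply/existsP; apply: contraR nz => /existsPn H; apply/eqP/rowP => i.
  by rewrite mxE; apply/eqP; move: (H i); rewrite negbK.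
rewrite mxE (bigD1 i) //= !mxE.
have h1 : 0 < u 0 i * u 0 i by rewrite lt_def mulf_neq0 //= -expr2 sqr_ge0.
have h2 : 0 <= \sum_(j < n | j != i) u 0 j * u^T j 0.
  by apply: sumr_ge0 => j _; rewrite mxE -expr2 sqr_ge0.
lra.
Qed.

Lemma posdef_gram n (G : 'M[R]_n) : G \in unitmx -> posdef (G *m G^T).
Proof.
move=> Gu v nz.
have -> : v *m (G *m G^T) *m v^T = (v *m G) *m (v *m G)^T by rewrite trmx_mul !mulmxA.
rewrite mulmx_tr_gt0 //.
by apply: contra_neq nz => h; rewrite -(mulmxK Gu v) h mul0mx.
Qed.

Lemma posdef_drsubmx n (M : 'M[R]_(1 + n)) : posdef M -> posdef (drsubmx M).
Proof.
move=> pM v nz.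
have nz' : (row_mx 0 v : 'rV_(1 + n)) != 0 by rewrite row_mx_eq0 eqxx (negbTE nz).
have := pM _ nz'; rewrite -{1}(submxK M) mul_row_block tr_row_mx mul_row_col.
by rewrite trmx0 !mul0mx !mulmx0 !add0r.
Qed.

Definition cholesky_factors n (M Q P : 'M[R]_n) :=
  [/\ is_trig_mx Q^T, is_trig_mx P^T, Q *m P = 1%:M & Q *m M *m Q^T = 1%:M].

Lemma cholesky_gram n (M Q P : 'M[R]_n) : cholesky_factors M Q P -> P *m P^T = M.
Proof.
case=> _ _ QP QMQ; have PQ := mulmx1C QP.
rewrite -[M]mul1mx -PQ -[_ *m M]mulmx1 -trmx1 -PQ trmx_mul !mulmxA.
by rewrite -(mulmxA P) -(mulmxA P) QMQ mulmx1.
Qed.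

(* Eliminate the first coordinate: with [w = (1, r)], [r Mp = -b], the form is
   block-diagonal with entries [w M w^T] and [Mp]; recurse on [Mp]. *)
Lemma cholesky_step n (M : 'M[R]_(1 + n)) : M^T = M -> posdef M ->
  (forall M' : 'M[R]_n, M'^T = M' -> posdef M' -> exists Q P, cholesky_factors M' Q P) ->
  exists Q P, cholesky_factors M Q P.
Proof.
move=> sM pM IH.
set a := ulsubmx M; set b := ursubmx M; set Mp := drsubmx M.
have eM : M = block_mx a b b^T Mp by rewrite -[LHS]submxK /b trmx_ursub sM.
have sMp : Mp^T = Mp by rewrite /Mp trmx_drsub sM.
have [Q' [P' chol']] := IH Mp sMp (posdef_drsubmx pM).
have eMp := cholesky_gram chol'.
case: chol' => tQ tP QP QMQ; have PQ := mulmx1C QP.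
set r := - (b *m Q'^T *m Q').
have rMp : r *m Mp = - b.
  rewrite /r -eMp mulNmx; congr (- _).
  rewrite !mulmxA -(mulmxA _ Q' P') QP mulmx1 -mulmxA -trmx_mul PQ trmx1.
  by rewrite mulmx1.
set w : 'rV[R]_(1 + n) := row_mx 1%:M r.
set s := (w *m M *m w^T) 0 0.
have s_gt0 : 0 < s by apply: pM; rewrite row_mx_eq0 negb_and oner_eq0.
set q := (Num.sqrt s)^-1.
have q_neq0 : q != 0 by rewrite invr_eq0 gt_eqF // sqrtr_gt0.
have q2s : q * q * s = 1.
  by rewrite /q -expr2 exprVn sqr_sqrtr ?ltW // mulVf // gt_eqF.
have eQ : col_mx (q *: w) (row_mx 0 Q') = block_mx q%:M (q *: r) 0 Q'.
  by rewrite block_mxEv /w scale_row_mx scalemx1.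
have wM : w *m M = row_mx (a + r *m b^T) 0.
  by rewrite eM /w mul_row_block !mul1mx rMp addrN.
have BM : row_mx 0 Q' *m M = row_mx (Q' *m b^T) (Q' *m Mp).
  by rewrite eM mul_row_block !mul0mx !add0r.
exists (col_mx (q *: w) (row_mx 0 Q')), (block_mx q^-1%:M (- (r *m P')) 0 P').
split.
- by rewrite eQ tr_block_mx is_trig_block_mx // trmx0 eqxx tQ mx11_is_trig.
- by rewrite tr_block_mx is_trig_block_mx // trmx0 eqxx tP mx11_is_trig.
- rewrite eQ mulmx_block [RHS]scalar_mx_block !mul0mx !mulmx0 !add0r addr0 QP.
  rewrite mul_scalar_mx -scalemxAl mulmxN scale_scalar_mx mulfV //.
  by rewrite mul_scalar_mx addNr.
rewrite mul_col_mx tr_col_mx mul_col_row [RHS]scalar_mx_block; congr block_mx.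
- rewrite -scalemxAl -scalemxAl linearZ /= -scalemxAr.
  by rewrite [w *m M *m w^T]mx11_scalar -/s !scale_scalar_mx mulrA q2s.
- rewrite -scalemxAl -scalemxAl wM tr_row_mx trmx0 mul_row_col mulmx0 mul0mx addr0.
  by rewrite scaler0.
- rewrite BM linearZ /= -scalemxAr /w tr_row_mx mul_row_col trmx1 mulmx1.
  rewrite -mulmxA -[Mp *m r^T]trmxK trmx_mul trmxK sMp rMp linearN /= mulmxN addrN.
  by rewrite scaler0.
- by rewrite BM tr_row_mx trmx0 mul_row_col mulmx0 add0r.
Qed.

Lemma cholesky n (M : 'M[R]_n) : M^T = M -> posdef M ->
  exists Q P, cholesky_factors M Q P.
Proof.
elim: n M => [|n IH] M sM pM.
  exists 0, 0; split; try (by apply/is_trig_mxP => -[]);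
  by apply/matrixP => -[].
exact: (cholesky_step sM pM IH).
Qed.

End Cholesky.

Lemma sumr3_gt0 (R : realDomainType) (I : finType) (f : I -> I -> I -> R) a b d :
  (forall i j k, 0 <= f i j k) -> 0 < f a b d ->
  0 < \sum_i \sum_j \sum_k f i j k.
Proof.
move=> f_ge0 f_gt0; rewrite (bigD1 a) //= (bigD1 b) //= (bigD1 d) //=.
have S1 : 0 <= \sum_(k | k != d) f a b k by apply: sumr_ge0.
have S2 : 0 <= \sum_(j | j != b) \sum_k f a j k.
  by apply: sumr_ge0 => j _; apply: sumr_ge0.
have S3 : 0 <= \sum_(i | i != a) \sum_j \sum_k f i j k.
  by apply: sumr_ge0 => i _; apply: sumr_ge0 => j _; apply: sumr_ge0.
lra.
Qed.

Section InnerProduct.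
Variables (R : realType) (n : nat).
Implicit Types (F O : 'M[R]_n) (x y z : 'rV[R]_n).

Lemma ipDl F x y z : ip F (x + y) z = ip F x z + ip F y z.
Proof. by rewrite /ip !mulmxDl mxE. Qed.

Lemma ipZl F a x z : ip F (a *: x) z = a * ip F x z.
Proof. by rewrite /ip -!scalemxAl mxE. Qed.

Lemma ipC F x y : ip F x y = ip F y x.
Proof. by rewrite /ip !mxE; apply: eq_bigr => i _; rewrite !mxE mulrC. Qed.

Lemma ipDr F x y z : ip F z (x + y) = ip F z x + ip F z y.
Proof. by rewrite !(ipC F z) ipDl. Qed.

Lemma ipZr F a x z : ip F z (a *: x) = a * ip F z x.
Proof. by rewrite !(ipC F z) ipZl. Qed.

Lemma ip0l F y : ip F 0 y = 0.
Proof. by rewrite /ip !mul0mx mxE. Qed.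

Lemma ip_suml F (I : Type) (r : seq I) (f : I -> 'rV[R]_n) w :
  ip F (\sum_(l <- r) f l) w = \sum_(l <- r) ip F (f l) w.
Proof. exact: (big_morph (ip F ^~ w) (fun u v => ipDl F u v w) (ip0l F w)). Qed.

Lemma ip_sumr F (I : Type) (r : seq I) (f : I -> 'rV[R]_n) w :
  ip F w (\sum_(l <- r) f l) = \sum_(l <- r) ip F w (f l).
Proof. by rewrite ipC ip_suml; apply: eq_bigr => l _; rewrite ipC. Qed.

Lemma ip_rows F i j : F \in unitmx -> ip F (row i F) (row j F) = (i == j)%:R.
Proof.
by move=> Fu; rewrite /ip -!row_mul mulmxV // !row1 mxE mul1mx !mxE eqxx eq_sym.
Qed.

Lemma invmx_right_inv (A B : 'M[R]_n) : A *m B = 1%:M -> invmx A = B.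
Proof.
move=> AB; have [Au _] := mulmx1_unit AB.
by rewrite -[RHS]mul1mx -(mulVmx Au) -mulmxA AB mulmx1.
Qed.

Lemma ip_orthogonal O F x y : F \in unitmx -> O^T *m O = 1%:M ->
  ip (O *m F) x y = ip F x y.
Proof.
move=> Fu OO; have OF_inv : invmx (O *m F) = invmx F *m O^T.
  by apply: invmx_right_inv; rewrite mulmxA -(mulmxA O) mulmxV // mulmx1 mulmx1C.
by rewrite /ip OF_inv !trmx_mul trmxK !mulmxA -(mulmxA _ O^T O) OO mulmx1.
Qed.

End InnerProduct.

Section Ricci.
Variables (R : realType) (n : nat) (br : 'rV[R]_n -> 'rV[R]_n -> 'rV[R]_n).
Hypothesis brDl : forall x y z, br (x + y) z = br x z + br y z.
Hypothesis brZl : forall a x y, br (a *: x) y = a *: br x y.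
Hypothesis brN : forall x y, br y x = - br x y.
Hypothesis killing_eq0 : forall x y, killing br x y = 0.
Hypothesis tr_ad_eq0 : forall x, \tr (admx br x) = 0.
Implicit Types (F O : 'M[R]_n) (x y u v : 'rV[R]_n).

Lemma brDr x y z : br z (x + y) = br z x + br z y.
Proof. by rewrite brN brDl opprD -!brN. Qed.

Lemma brZr a x y : br y (a *: x) = a *: br y x.
Proof. by rewrite brN brZl -scalerN -brN. Qed.

Lemma br0l x : br 0 x = 0.
Proof. by rewrite -(scale0r (0 : 'rV[R]_n)) brZl !scale0r. Qed.

Lemma meancurv_eq0 F : meancurv br F = 0.
Proof. by rewrite /meancurv big1 // => i _; rewrite tr_ad_eq0 scale0r. Qed.

Lemma ricE F x y : ric br F x y =
  - (1/2) * (\sum_(i < n) ip F (br x (row i F)) (br y (row i F)))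
  + (1/4) * (\sum_(i < n) \sum_(j < n)
               ip F (br (row i F) (row j F)) x * ip F (br (row i F) (row j F)) y).
Proof. by rewrite /ric killing_eq0 meancurv_eq0 !br0l !ip0l; ring. Qed.

Lemma ricC F x y : ric br F x y = ric br F y x.
Proof.
rewrite !ricE; congr (_ * _ + _ * _).
  by apply: eq_bigr => i _; rewrite ipC.
by apply: eq_bigr => i _; apply: eq_bigr => j _; rewrite mulrC.
Qed.

Lemma ricDr F x u v : ric br F x (u + v) = ric br F x u + ric br F x v.
Proof.
pose f i := row i F.
have e1 : \sum_i ip F (br x (f i)) (br (u + v) (f i)) =
    \sum_i ip F (br x (f i)) (br u (f i)) + \sum_i ip F (br x (f i)) (br v (f i)).
  by rewrite -big_split; apply: eq_bigr => i _; rewrite brDl ipDr.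
have e2 : \sum_i \sum_j ip F (br (f i) (f j)) x * ip F (br (f i) (f j)) (u + v) =
    \sum_i \sum_j ip F (br (f i) (f j)) x * ip F (br (f i) (f j)) u +
    \sum_i \sum_j ip F (br (f i) (f j)) x * ip F (br (f i) (f j)) v.
  rewrite -big_split; apply: eq_bigr => i _; rewrite -big_split.
  by apply: eq_bigr => j _; rewrite ipDr mulrDr.
by rewrite !ricE e1 e2; ring.
Qed.

Lemma ricZr F x a u : ric br F x (a *: u) = a * ric br F x u.
Proof.
pose f i := row i F.
have e1 : \sum_i ip F (br x (f i)) (br (a *: u) (f i)) =
    a * \sum_i ip F (br x (f i)) (br u (f i)).
  by rewrite mulr_sumr; apply: eq_bigr => i _; rewrite brZl ipZr.
have e2 : \sum_i \sum_j ip F (br (f i) (f j)) x * ip F (br (f i) (f j)) (a *: u) =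
    a * \sum_i \sum_j ip F (br (f i) (f j)) x * ip F (br (f i) (f j)) u.
  rewrite mulr_sumr; apply: eq_bigr => i _; rewrite mulr_sumr.
  by apply: eq_bigr => j _; rewrite ipZr mulrCA.
by rewrite !ricE e1 e2; ring.
Qed.

Lemma ric_sumr F x (I : Type) (r : seq I) (f : I -> 'rV[R]_n) :
  ric br F x (\sum_(l <- r) f l) = \sum_(l <- r) ric br F x (f l).
Proof.
apply: (big_morph _ (ricDr F x)).
by rewrite -(scale0r (0 : 'rV[R]_n)) ricZr mul0r.
Qed.

Lemma ric_orthogonal O F x y : F \in unitmx -> O^T *m O = 1%:M ->
  ric br (O *m F) x y = ric br F x y.
Proof.
move=> Fu OO; pose f i := row i F; pose g i := row i (O *m F).
have trace_inv beta := @bilinear_rows_trace_orthogonal _ _ beta O F.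
have ipE u w : ip (O *m F) u w = ip F u w by apply: ip_orthogonal.
have T1 : \sum_i ip (O *m F) (br x (g i)) (br y (g i)) =
          \sum_i ip F (br x (f i)) (br y (f i)).
  { apply: eq_trans (trace_inv (fun u w => ip F (br x u) (br y w)) _ _ _ _ OO).
    - by apply: eq_bigr => i _; rewrite ipE.
    all: by move=> *; rewrite ?(brDr, brZr, ipDl, ipDr, ipZl, ipZr). }
have T2 : \sum_i \sum_j ip (O *m F) (br (g i) (g j)) x * ip (O *m F) (br (g i) (g j)) y =
          \sum_i \sum_j ip F (br (f i) (f j)) x * ip F (br (f i) (f j)) y.
  { transitivity (\sum_i \sum_j ip F (br (g i) (f j)) x * ip F (br (g i) (f j)) y).
    { apply: eq_bigr => i _.
      apply: eq_trans (trace_inv (fun u w => ip F (br (g i) u) x * ip F (br (g i) w) y)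
                       _ _ _ _ OO).
      - by apply: eq_bigr => j _; rewrite !ipE.
      all: by move=> *; rewrite ?(brDr, brZr, ipDl, ipZl, mulrDl, mulrDr); ring. }
    rewrite exchange_big [RHS]exchange_big /=; apply: eq_bigr => j _.
    apply: (trace_inv (fun u w => ip F (br u (f j)) x * ip F (br w (f j)) y)) OO.
    all: by move=> *; rewrite ?(brDl, brZl, ipDl, ipZl, mulrDl, mulrDr); ring. }
by rewrite !ricE T1 T2.
Qed.

Section Soliton.
Variables (F : 'M[R]_n) (c : R) (D : 'M[R]_n).
Hypothesis F_unit : F \in unitmx.
Hypothesis D_derivation : is_derivation br D.
Hypothesis ricci_soliton : forall x, RicOp br F x = c *: x + x *m D.

Lemma ric_soliton x y : ric br F x y = c * ip F x y + ip F (x *m D) y.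
Proof.
have on_rows l : ric br F x (row l F) = c * ip F x (row l F) + ip F (x *m D) (row l F).
  have := congr1 (ip F ^~ (row l F)) (ricci_soliton x).
  rewrite /RicOp /= ipDl ipZl ip_suml => <-.
  rewrite (bigD1 l) //= big1 ?addr0; first by rewrite ipZl ip_rows // eqxx mulr1.
  by move=> i /negbTE il; rewrite ipZl ip_rows // il mulr0.
have -> : y = \sum_l (y *m invmx F) 0 l *: row l F.
  by rewrite -mulmx_sum_row -mulmxA mulVmx // mulmx1.
rewrite ric_sumr !ip_sumr mulr_sumr -big_split; apply: eq_bigr => l _.
by rewrite ricZr !ipZr on_rows /=; ring.
Qed.

Lemma derivation_selfadjoint x y : ip F (x *m D) y = ip F (y *m D) x.
Proof. by apply: (@addrI _ (c * ip F x y)); rewrite -ric_soliton ricC ric_soliton ipC. Qed.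

Section Orthonormalization.
Variables Q P : 'M[R]_n.
Hypothesis QP_cholesky : cholesky_factors (invmx F *m (invmx F)^T) Q P.
Hypothesis D_utrig : is_trig_mx D^T.

Lemma cholesky_QP : Q *m P = 1%:M. Proof. by case: QP_cholesky. Qed.

Lemma cholesky_orthogonal : (Q *m invmx F)^T *m (Q *m invmx F) = 1%:M.
Proof.
case: QP_cholesky => _ _ _ QMQ.
by apply: mulmx1C; rewrite trmx_mul !mulmxA -(mulmxA Q) -QMQ.
Qed.

Lemma cholesky_factorE : Q *m invmx F *m F = Q.
Proof. by rewrite -mulmxA mulVmx // mulmx1. Qed.

Lemma ip_cholesky x y : ip Q x y = ip F x y.
Proof. by rewrite -{1}cholesky_factorE ip_orthogonal // cholesky_orthogonal. Qed.

Lemma ric_cholesky x y : ric br Q x y = ric br F x y.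
Proof. by rewrite -{1}cholesky_factorE ric_orthogonal // cholesky_orthogonal. Qed.

Lemma ip_row_cholesky u j : ip Q u (row j Q) = (u *m P) 0 j.
Proof.
rewrite /ip (invmx_right_inv cholesky_QP) -row_mul cholesky_QP row1 mxE (bigD1 j) //= big1 ?addr0.
  by rewrite !mxE !eqxx mulr1.
by move=> m /negbTE mj; rewrite !mxE mj mulr0.
Qed.

Lemma cholesky_diag k : Q k k * P k k = 1.
Proof.
case: QP_cholesky => tQ tP QP _.
by rewrite -utrig_mulmx_diag // QP !mxE eqxx.
Qed.

(* [Q *m D *m P] is the matrix of [D] in the orthonormal basis [row i Q]: it is
   upper triangular because [Q], [D], [P] are, and symmetric because [D] is
   self-adjoint, hence diagonal. *)
Lemma cholesky_conj_derivation : Q *m D *m P = diag_mx (\row_k D k k).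
Proof.
case: QP_cholesky => tQ tP _ _; set Dq := Q *m D *m P.
have Dq_sym i j : Dq i j = Dq j i.
  have Dq_ip a b : Dq a b = ip Q (row a Q *m D) (row b Q).
    by rewrite ip_row_cholesky -!row_mul !mxE.
  by rewrite !Dq_ip !ip_cholesky derivation_selfadjoint.
have /is_trig_mxP Dq_utrig : is_trig_mx Dq^T.
  by rewrite !trmx_mul; apply: is_trig_mxM tP (is_trig_mxM D_utrig tQ).
apply/matrixP => i j; have -> : diag_mx (\row_k D k k) i j = D i i *+ (i == j).
  by rewrite !mxE.
case: (ltngtP i j) => [ij|ji|/val_inj <-].
- by have := Dq_utrig i j ij; rewrite mxE Dq_sym -val_eqE (ltn_eqF ij) mulr0n.
- by have := Dq_utrig j i ji; rewrite mxE eq_sym -val_eqE (ltn_eqF ji) mulr0n.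
rewrite eqxx mulr1n /Dq -mulmxA utrig_mulmx_diag //; last first.
  by rewrite trmx_mul; apply: is_trig_mxM tP D_utrig.
by rewrite utrig_mulmx_diag // mulrCA cholesky_diag mulr1.
Qed.

Definition struct_const i j : 'rV[R]_n := br (row i Q) (row j Q) *m P.
Local Notation s := struct_const.

Lemma struct_constN i j : s j i = - s i j.
Proof. by rewrite /s brN mulNmx. Qed.

Lemma row_cholesky_mulD a : row a Q *m D = D a a *: row a Q.
Proof.
have := congr1 (row a) (congr1 (mulmx^~ Q) cholesky_conj_derivation).
rewrite -!mulmxA (mulmx1C cholesky_QP) mulmx1 !row_mul => ->.
by rewrite row_diag_mx -scalemxAl -rowE mxE.
Qed.

Lemma struct_const_grading i j k : s i j 0 k * D k k = (D i i + D j j) * s i j 0 k.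
Proof.
have brD : br (row i Q) (row j Q) *m D = (D i i + D j j) *: br (row i Q) (row j Q).
  by rewrite D_derivation !row_cholesky_mulD brZl brZr scalerDl.
have := congr1 (mulmx (s i j)) cholesky_conj_derivation.
rewrite {1}/struct_const !mulmxA -(mulmxA _ P Q) (mulmx1C cholesky_QP) mulmx1 brD.
rewrite -scalemxAl -/(s i j) mul_mx_diag => /(congr1 (fun v : 'rV_n => v 0 k)).
by rewrite !mxE => ->.
Qed.

Lemma ric_row_cholesky k : ric br Q (row k Q) (row k Q) =
  - (1/2) * (\sum_i \sum_m s k i 0 m ^+ 2) + (1/4) * (\sum_i \sum_j s i j 0 k ^+ 2).
Proof.
rewrite ricE; congr (_ * _ + _ * _); apply: eq_bigr => i _.
  rewrite /ip (invmx_right_inv cholesky_QP) mxE; apply: eq_bigr => m _.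
  by rewrite [_^T _ _]mxE expr2.
by apply: eq_bigr => j _; rewrite ip_row_cholesky expr2.
Qed.

Lemma ric_row_soliton k : ric br Q (row k Q) (row k Q) = c + D k k.
Proof.
have [Q_unit _] := mulmx1_unit cholesky_QP.
rewrite ric_cholesky ric_soliton -!ip_cholesky row_cholesky_mulD ipZl ip_rows //.
by rewrite eqxx !mulr1.
Qed.

(* Sum of the diagonal identities [ric_row_cholesky = ric_row_soliton] weighted
   by [E]; by antisymmetry of [s] the first sum contributes [- (E i + E j) / 4]. *)
Lemma nilsoliton_weight_identity (E : 'I_n -> R) :
  \sum_k E k * (c + D k k) =
  1/4 * \sum_i \sum_j \sum_k (E k - E i - E j) * s i j 0 k ^+ 2.
Proof.
set X := \sum_i \sum_j \sum_k E i * s i j 0 k ^+ 2.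
set Y := \sum_i \sum_j \sum_k E j * s i j 0 k ^+ 2.
set Z := \sum_i \sum_j \sum_k E k * s i j 0 k ^+ 2.
have eR : \sum_i \sum_j \sum_k (E k - E i - E j) * s i j 0 k ^+ 2 = Z - X - Y.
  rewrite /X /Y /Z -!sumrB; apply: eq_bigr => i _; rewrite -!sumrB.
  by apply: eq_bigr => j _; rewrite -!sumrB; apply: eq_bigr => k _; ring.
have eXY : X = Y.
  rewrite /Y exchange_big /=; apply: eq_bigr => i _; apply: eq_bigr => j _.
  by apply: eq_bigr => k _; rewrite struct_constN mxE sqrrN.
have eL : \sum_k E k * (c + D k k) = - (1/2) * X + 1/4 * Z.
  transitivity (\sum_k (- (1/2) * (E k * \sum_i \sum_m s k i 0 m ^+ 2)
                        + 1/4 * (E k * \sum_i \sum_j s i j 0 k ^+ 2))).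
    by apply: eq_bigr => k _; rewrite -ric_row_soliton ric_row_cholesky; ring.
  rewrite big_split /= -!mulr_sumr; congr (_ * _ + _ * _).
    apply: eq_bigr => k _; rewrite mulr_sumr; apply: eq_bigr => i _.
    by rewrite mulr_sumr.
  rewrite /Z; under [RHS]eq_bigr => i _ do rewrite exchange_big /=.
  rewrite [RHS]exchange_big /=; apply: eq_bigr => k _; rewrite mulr_sumr.
  by apply: eq_bigr => i _; rewrite mulr_sumr.
rewrite eL eR -eXY; lra.
Qed.

End Orthonormalization.
End Soliton.
End Ricci.

Section N7Bracket.
Variable R : realType.
Local Notation br := (@n7br R).

(* [o k] indexes [e_(k+1)]. *)
Definition o0 : 'I_7 := @Ordinal 7 0 isT.
Definition o1 : 'I_7 := @Ordinal 7 1 isT.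
Definition o2 : 'I_7 := @Ordinal 7 2 isT.
Definition o3 : 'I_7 := @Ordinal 7 3 isT.
Definition o4 : 'I_7 := @Ordinal 7 4 isT.
Definition o5 : 'I_7 := @Ordinal 7 5 isT.
Definition o6 : 'I_7 := @Ordinal 7 6 isT.

Lemma big_ord7 (f : 'I_7 -> R) :
  \sum_(i < 7) f i = f o0 + f o1 + f o2 + f o3 + f o4 + f o5 + f o6.
Proof.
rewrite !big_ord_recl big_ord0 addr0 !addrA.
by congr (_ + _ + _ + _ + _ + _ + _); congr f; apply: val_inj.
Qed.

Lemma ord7_ind (P : 'I_7 -> Prop) :
  P o0 -> P o1 -> P o2 -> P o3 -> P o4 -> P o5 -> P o6 -> forall i, P i.
Proof.
move=> P0 P1 P2 P3 P4 P5 P6 [[|[|[|[|[|[|[|k]]]]]]] Hk] //;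
  by rewrite (bool_irrelevance Hk isT).
Qed.

Definition n7coord (x y : 'rV[R]_7) (k : 'I_7) : R :=
  match nat_of_ord k with
  | 3 => x 0 o0 * y 0 o1 - x 0 o1 * y 0 o0
  | 4 => x 0 o1 * y 0 o2 - x 0 o2 * y 0 o1
  | 5 => x 0 o0 * y 0 o3 - x 0 o3 * y 0 o0
  | 6 => - (x 0 o0 * y 0 o4 - x 0 o4 * y 0 o0) + (x 0 o0 * y 0 o5 - x 0 o5 * y 0 o0)
         + (x 0 o1 * y 0 o4 - x 0 o4 * y 0 o1) + (x 0 o2 * y 0 o3 - x 0 o3 * y 0 o2)
  | _ => 0
  end.

Lemma n7brE x y k : br x y 0 k = n7coord x y k.
Proof.
have eeE m (lt_m7 : (m.-1 < 7)%N) : ee R m = delta_mx 0 (Ordinal lt_m7).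
  by congr delta_mx; apply: val_inj; rewrite /= inordK.
rewrite /n7br summxE big_ord7 !summxE !big_ord7 /n7b /=.
rewrite (eeE 4 isT) (eeE 5 isT) (eeE 6 isT) (eeE 7 isT).
by move: k; apply: ord7_ind; rewrite /n7coord /= !mxE /=; ring.
Qed.

Local Ltac n7_row_eq := apply/rowP; apply: ord7_ind; rewrite !mxE !n7brE /n7coord /= ?mxE; ring.

Lemma n7brDl x y z : br (x + y) z = br x z + br y z. Proof. n7_row_eq. Qed.
Lemma n7brZl a x y : br (a *: x) y = a *: br x y. Proof. n7_row_eq. Qed.
Lemma n7brN x y : br y x = - br x y. Proof. n7_row_eq. Qed.
Lemma n7br_self x : br x x = 0. Proof. n7_row_eq. Qed.

Lemma n7_killing_eq0 x y : killing br x y = 0.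
Proof.
by rewrite /killing /mxtrace big_ord7 !mxE !big_ord7 /admx !mxE !n7brE /n7coord /= !mxE /=; ring.
Qed.

Lemma n7_tr_ad_eq0 x : \tr (admx br x) = 0.
Proof. by rewrite /mxtrace big_ord7 /admx !mxE !n7brE /n7coord /= !mxE /=; ring. Qed.

End N7Bracket.

Section N7Derivation.
Variables (R : realType) (D : 'M[R]_7).
Hypothesis D_derivation : is_derivation (@n7br R) D.

Lemma n7_derivation_coord a b m :
  (n7br (delta_mx 0 a) (delta_mx 0 b) *m D) 0 m =
  (n7br (delta_mx 0 a *m D) (delta_mx 0 b) + n7br (delta_mx 0 a) (delta_mx 0 b *m D)) 0 m.
Proof. by rewrite D_derivation. Qed.

(* [derivation_eq dabm a b m] records coordinate [m] of the derivation rule on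
   [[e_a, e_b]]; names use the 1-based indices of the paper. *)
Local Ltac derivation_eq H a b m :=
  have H := n7_derivation_coord a b m;
  rewrite -!rowE !(mxE, big_ord7, n7brE) /n7coord /= !mxE /= in H.

Lemma n7_derivation_utrig : is_trig_mx D^T.
Proof.
derivation_eq d121 o0 o1 o0. derivation_eq d122 o0 o1 o1. derivation_eq d123 o0 o1 o2.
derivation_eq d134 o0 o2 o3. derivation_eq d141 o0 o3 o0. derivation_eq d142 o0 o3 o1.
derivation_eq d143 o0 o3 o2. derivation_eq d144 o0 o3 o3. derivation_eq d145 o0 o3 o4.
derivation_eq d151 o0 o4 o0. derivation_eq d152 o0 o4 o1. derivation_eq d153 o0 o4 o2.
derivation_eq d154 o0 o4 o3. derivation_eq d155 o0 o4 o4. derivation_eq d156 o0 o4 o5.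
derivation_eq d164 o0 o5 o3. derivation_eq d166 o0 o5 o5. derivation_eq d231 o1 o2 o0.
derivation_eq d233 o1 o2 o2. derivation_eq d234 o1 o2 o3. derivation_eq d246 o1 o3 o5.
apply/is_trig_mxP; apply: ord7_ind; apply: ord7_ind => //= _; rewrite mxE.
- by clear -d246; lra.
- by clear -d122 d144 d156 d166 d234; lra.
- by clear -d121; lra.
- by clear -d231; lra.
- by clear -d141; lra.
- by clear -d151; lra.
- by clear -d134; lra.
- by clear -d122; lra.
- by clear -d142 d154 d164; lra.
- by clear -d142; lra.
- by clear -d152; lra.
- by clear -d123; lra.
- by clear -d233; lra.
- by clear -d143; lra.
- by clear -d153; lra.
- by clear -d122 d144 d156 d166; lra.
- by clear -d122 d144; lra.
- by clear -d142 d164; lra.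
- by clear -d145; lra.
- by clear -d155; lra.
- by clear -d122 d144 d166; lra.
Qed.

Definition n7weight (k : 'I_7) : nat :=
  match nat_of_ord k with 0 | 1 => 1 | 2 | 3 => 2 | 4 | 5 => 3 | _ => 4 end%N.

Lemma n7_derivation_diag k : D k k = (n7weight k)%:R * D o0 o0.
Proof.
derivation_eq d124 o0 o1 o3. derivation_eq d135 o0 o2 o4. derivation_eq d145 o0 o3 o4.
derivation_eq d146 o0 o3 o5. derivation_eq d157 o0 o4 o6. derivation_eq d167 o0 o5 o6.
derivation_eq d235 o1 o2 o4. derivation_eq d236 o1 o2 o5. derivation_eq d246 o1 o3 o5.
derivation_eq d257 o1 o4 o6.
move: k; apply: ord7_ind; rewrite /n7weight /=.
- by rewrite mul1r.
- by clear -d135 d157 d236 d246 d257; lra.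
- by clear -d124 d135 d145 d146 d157 d167 d235 d236; lra.
- by clear -d124 d135 d157 d236 d246 d257; lra.
- by clear -d124 d145 d146 d167 d246 d257; lra.
- by clear -d124 d135 d146 d157 d236 d246 d257; lra.
- by clear -d124 d135 d145 d146 d157 d167 d236 d246 d257; lra.
Qed.

End N7Derivation.

Section N7Soliton.
Variables (R : realType) (F : 'M[R]_7) (c : R) (D Q P : 'M[R]_7).
Local Notation br := (@n7br R).
Hypothesis F_unit : F \in unitmx.
Hypothesis D_derivation : is_derivation br D.
Hypothesis ricci_soliton : forall x, RicOp br F x = c *: x + x *m D.
Hypothesis QP_cholesky : cholesky_factors (invmx F *m (invmx F)^T) Q P.
Local Notation s := (struct_const br Q P).
Local Notation t := (D o0 o0).
Local Notation D_weight := (n7_derivation_diag D_derivation).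

Lemma n7_weight_identity (E : 'I_7 -> R) :
  \sum_k E k * (c + D k k) =
  1/4 * \sum_i \sum_j \sum_k (E k - E i - E j) * s i j 0 k ^+ 2.
Proof.
exact: (nilsoliton_weight_identity (@n7brDl R) (@n7brZl R) (@n7brN R)
  (@n7_killing_eq0 R) (@n7_tr_ad_eq0 R) F_unit ricci_soliton QP_cholesky
  (n7_derivation_utrig D_derivation)).
Qed.

Lemma n7_weighted_sum (E : 'I_7 -> R) : \sum_k E k * (c + D k k) =
  E o0 * (c + t) + E o1 * (c + t) + E o2 * (c + 2 * t) + E o3 * (c + 2 * t)
  + E o4 * (c + 3 * t) + E o5 * (c + 3 * t) + E o6 * (c + 4 * t).
Proof.
rewrite big_ord7 (D_weight o1) (D_weight o2).
rewrite (D_weight o3) (D_weight o4) (D_weight o5).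
by rewrite (D_weight o6) /n7weight /= mul1r.
Qed.

Lemma n7_struct_const_graded i j k :
  t != 0 -> n7weight k != (n7weight i + n7weight j)%N -> s i j 0 k = 0.
Proof.
move=> t_neq0 w_neq.
have := struct_const_grading (@n7brDl R) (@n7brZl R) (@n7brN R) (@n7_killing_eq0 R)
  (@n7_tr_ad_eq0 R) F_unit D_derivation ricci_soliton QP_cholesky
  (n7_derivation_utrig D_derivation) i j k.
rewrite (D_weight i) (D_weight j) (D_weight k).
move=> grading.
have : s i j 0 k * (t * ((n7weight k)%:R - (n7weight i + n7weight j)%:R)) = 0.
  rewrite natrD -[LHS]subr0 -(subrr (s i j 0 k * ((n7weight k)%:R * t))).
  by rewrite {2}grading; ring.
move/eqP; rewrite !mulf_eq0 (negbTE t_neq0) subr_eq0 eqr_nat (negbTE w_neq) /= orbF.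
by move/eqP.
Qed.

Lemma n7_struct_constE i j k :
  s i j 0 k = \sum_m n7coord (row i Q) (row j Q) m * P m k.
Proof. by rewrite mxE; apply: eq_bigr => m _; rewrite n7brE. Qed.

Lemma n7_struct_const_self i : s i i = 0.
Proof. by rewrite /struct_const n7br_self mul0mx. Qed.

(* [row o6 Q] is a multiple of [e_7], which is central. *)
Lemma n7_struct_const_last j : s o6 j = 0.
Proof.
case: QP_cholesky => tQ _ _ _.
have q6_central : br (row o6 Q) (row j Q) = 0.
  apply/rowP => k; rewrite n7brE mxE (utrig_mx_ifE tQ).
  by move: k; apply: ord7_ind; rewrite /n7coord /= ?mxE /=; ring.
by rewrite /struct_const q6_central mul0mx.
Qed.

Lemma n7_struct_const_124 : s o0 o1 0 o3 != 0.
Proof.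
case: QP_cholesky => tQ tP _ _.
rewrite n7_struct_constE big_ord7 /n7coord /= !mxE (utrig_mx_ifE tQ) (utrig_mx_ifE tP).
rewrite !mxE /= [X in X != 0](_ : _ = Q o0 o0 * Q o1 o1 * P o3 o3); last by ring.
have QP_diag k : Q k k * P k k = 1 := cholesky_diag QP_cholesky k.
have Q_neq0 k : Q k k != 0.
  by apply/eqP => Q0; have := QP_diag k; rewrite Q0 mul0r => /eqP; rewrite eq_sym oner_eq0.
have P_neq0 k : P k k != 0.
  by apply/eqP => P0; have := QP_diag k; rewrite P0 mulr0 => /eqP; rewrite eq_sym oner_eq0.
by rewrite !mulf_neq0.
Qed.

(* Weight [1] gives [7c + 16t < 0] and the indicator of [e_7] gives [c + 4t >= 0]. *)
Lemma n7_derivation_weight_gt0 : 0 < t.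
Proof.
set S := \sum_i \sum_j \sum_k s i j 0 k ^+ 2.
have S_gt0 : 0 < S.
  apply: (@sumr3_gt0 _ _ _ o0 o1 o3) => [i j k|]; first exact: sqr_ge0.
  by rewrite exprn_even_gt0 //= n7_struct_const_124.
have E1 := n7_weight_identity (fun _ => 1).
rewrite n7_weighted_sum /= in E1.
have sum_neg : \sum_i \sum_j \sum_k (1 - 1 - 1) * s i j 0 k ^+ 2 = - S.
  rewrite -!sumrN; apply: eq_bigr => i _; rewrite -sumrN; apply: eq_bigr => j _.
  by rewrite -sumrN; apply: eq_bigr => k _; ring.
rewrite sum_neg in E1.
have E7 := n7_weight_identity (fun k => (k == o6)%:R).
rewrite n7_weighted_sum /= in E7.
have N_ge0 : 0 <= \sum_i \sum_j \sum_k
    ((k == o6)%:R - (i == o6)%:R - (j == o6)%:R) * s i j 0 k ^+ 2.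
  apply: sumr_ge0 => i _; apply: sumr_ge0 => j _; apply: sumr_ge0 => k _.
  case: (eqVneq i o6) => [->|_].
    by rewrite n7_struct_const_last mxE expr0n /= mulr0.
  case: (eqVneq j o6) => [->|_].
    rewrite (struct_constN (@n7brN R)) mxE sqrrN n7_struct_const_last mxE.
    by rewrite expr0n /= mulr0.
  by rewrite !subr0 mulr_ge0 ?ler0n ?sqr_ge0.
lra.
Qed.

Definition n7obstruction (k : 'I_7) : R :=
  match nat_of_ord k with
  | 0 => -3 | 1 => 10 | 2 => -18 | 3 => 8 | 4 => -7 | 5 => 6 | _ => 4
  end.

(* Each term is nonnegative: either the coefficient is, or [s i j 0 k] vanishes
   by the grading or because [Q] and [P] are upper triangular. *)
Lemma n7_obstruction_term_ge0 (i j k : 'I_7) : (i < j)%N ->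
  0 <= (n7obstruction k - n7obstruction i - n7obstruction j) * s i j 0 k ^+ 2.
Proof.
case: QP_cholesky => tQ tP _ _.
have t_neq0 : t != 0 by rewrite gt_eqF // n7_derivation_weight_gt0.
move: i j k; apply: ord7_ind; apply: ord7_ind; apply: ord7_ind => //= _;
  first [ apply: mulr_ge0; [rewrite /n7obstruction /=; lra | exact: sqr_ge0]
        | by rewrite n7_struct_const_graded ?expr0n /= ?mulr0
        | rewrite (_ : s _ _ 0 _ = 0) ?expr0n /= ?mulr0 //;
          rewrite n7_struct_constE big_ord7 /n7coord /= !mxE;
          rewrite (utrig_mx_ifE tQ) (utrig_mx_ifE tP) !mxE /=; ring ].
Qed.

Lemma n7_obstruction_ge0 i j k :
  0 <= (n7obstruction k - n7obstruction i - n7obstruction j) * s i j 0 k ^+ 2.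
Proof.
case: (ltngtP i j) => [ij|ji|/val_inj <-]; first exact: n7_obstruction_term_ge0.
  rewrite (struct_constN (@n7brN R)) mxE sqrrN.
  rewrite (_ : _ - _ - _ = n7obstruction k - n7obstruction j - n7obstruction i); last by ring.
  exact: n7_obstruction_term_ge0.
by rewrite n7_struct_const_self mxE expr0n /= mulr0.
Qed.

Lemma n7_soliton_contradiction : False.
Proof.
have term_gt0 :
    0 < (n7obstruction o3 - n7obstruction o0 - n7obstruction o1) * s o0 o1 0 o3 ^+ 2.
  rewrite mulr_gt0 ?exprn_even_gt0 //= ?n7_struct_const_124 //.
  by rewrite /n7obstruction /=; lra.
have weighted_eq0 : \sum_k n7obstruction k * (c + D k k) = 0.
  by rewrite n7_weighted_sum /n7obstruction /=; ring.
have := sumr3_gt0 n7_obstruction_ge0 term_gt0.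
rewrite n7_weight_identity in weighted_eq0.
lra.
Qed.

End N7Soliton.

Theorem mainTheorem4 (R : realType) : ~ einstein_nilradical (@n7br R).
Proof.
move=> [F [F_unit [c [D [D_derivation ricci_soliton]]]]].
have [Q [P QP_cholesky]] : exists Q P, cholesky_factors (invmx F *m (invmx F)^T) Q P.
  apply: cholesky; first by rewrite trmx_mul trmxK.
  by apply: posdef_gram; rewrite unitmx_inv.
exact: (n7_soliton_contradiction F_unit D_derivation ricci_soliton QP_cholesky).
Qed.
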